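(* Let $(s_t^{\mathrm{std}})_{t\ge1}$ be real random variables, let $W\ge1$ be an integer, $\kappa\ge0$, $h_{\mathrm C}>0$, and define for $t\ge1$ $$G_t^{\mathrm{score}}=\max_{1\le m\le\min(W,t)}\sqrt m\,\big(\bar s^{\mathrm{std}}_{t-m+1:t}-\kappa\big)_+,\qquad \bar s^{\mathrm{std}}_{t-m+1:t}=\frac1m\sum_{u=t-m+1}^t s_u^{\mathrm{std}},$$ where $(a)_+=\max(a,0)$. (i) (False alarms.) Suppose that for every $t\le T$, every $m\in\{1,\dots,\min(W,t)\}$ and every $a>0$, $\mathbb P(\sqrt m\,\bar s^{\mathrm{std}}_{t-m+1:t}>a)\le e^{-a^2/2}$. Then $$\mathbb P\Big(\max_{1\le t\le T}G_t^{\mathrm{score}}>h_{\mathrm C}\Big)\le TW\,e^{-h_{\mathrm C}^2/2}.$$ (ii) (Detection.) Suppose that for some time $t$ there is a block $\{t-m_\star+1,\dots,t\}$ of length $m_\star\le\min(W,t)$ and a number $\delta>\kappa$ such that, with $\bar s=\bar s^{\mathrm{std}}_{t-m_\star+1:t}$, one has $\mathbb P(\sqrt{m_\star}(\bar s-\delta)\le-u)\le e^{-u^2/2}$ for every $u>0$. Then for any $\beta\in(0,1)$, if $$m_\star\ge\frac{\big(h_{\mathrm C}+\sqrt{2\log(1/\beta)}\big)^2}{(\delta-\kappa)^2},$$ we have $\mathbb P(G_t^{\mathrm{score}}\le h_{\mathrm C})\le\beta$, i.e. a restart (the event $G^{\mathrm{score}}>h_{\mathrm C}$) occurs within the block with probability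 at least $1-\beta$. In particular, detection occurs within $O\big(h_{\mathrm C}^2/(\delta-\kappa)^2\big)$ samples up to logarithmic factors.
   Context: This is the window-limited CUSUM restart rule: $s_t^{\mathrm{std}}$ is a standardized prequential score (average negative log pre-update predictive likelihood on batch $t$, standardized by running mean and scale), $W$ the maximum window, $\kappa$ a drift allowance and $h_{\mathrm C}$ the restart threshold; a restart is triggered when $G_t^{\mathrm{score}}>h_{\mathrm C}$. *)

From HB Require Import structures.
From mathcomp Require Import all_boot all_order all_algebra.
From mathcomp Require Import all_classical all_reals all_analysis.
Set Implicit Arguments. Unset Strict Implicit. Unset Printing Implicit Defensive.
Import Order.TTheory GRing.Theory Num.Theory.
Local Open Scope ring_scope.

Definition pospart {R : realType} (a : R) : R := Num.max a 0.

Definition sbar {R : realType} {T : Type} (s : nat -> T -> R) (t m : nat) (x : T) : R :=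
  (m%:R)^-1 * \sum_(t - m + 1 <= u < t.+1) s u x.

(* G_t^score = max_{1<=m<=min(W,t)} sqrt m * (sbar_{t-m+1:t} - kappa)_+ ;
   all terms are >= 0 so using 0 as neutral element of the max is harmless. *)
Definition Gscore {R : realType} {T : Type} (W : nat) (kappa : R)
  (s : nat -> T -> R) (t : nat) (x : T) : R :=
  \big[Num.max/0]_(1 <= m < (minn W t).+1)
     (Num.sqrt (m%:R) * pospart (sbar s t m x - kappa)).

Definition maxGscore {R : realType} {T : Type} (W : nat) (kappa : R)
  (s : nat -> T -> R) (TT : nat) (x : T) : R :=
  \big[Num.max/0]_(1 <= t < TT.+1) Gscore W kappa s t x.

From HB Require Import structures.
From mathcomp Require Import all_boot all_order all_algebra.
From mathcomp Require Import all_classical all_reals all_analysis.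
From mathcomp Require Import lra.
Import Order.TTheory GRing.Theory Num.Theory.
Local Open Scope ring_scope.
Local Open Scope classical_set_scope.

(** False alarms: a threshold crossing of the maximum over the at most [T W]
    pairs (t, m) is a crossing of one of the window statistics, and since
    [kappa >= 0] a crossing of [sqrt m (sbar - kappa)_+] is a crossing of
    [sqrt m sbar]; the union bound then adds up [T W] Gaussian tails.
    Detection: if [G_t <= hC] then in particular the window of length [m*]
    gives [sqrt m* (sbar - kappa) <= hC]; the sample-size condition says
    [hC + u <= sqrt m* (delta - kappa)] with [u = sqrt (2 log (1/beta))], so
    [sqrt m* (sbar - delta) <= -u], an event of probability at most
    [exp (-u^2/2) = beta]. *)

Section measurable_events.
Context {d : measure_display} {T : measurableType d} {R : realType}.
Implicit Types f : T -> R.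

Lemma measurable_ltr_set f a : measurable_fun setT f -> measurable [set x | a < f x].
Proof.
by move=> mf; rewrite -preimage_itvoy -[_ @^-1` _]setTI; exact: mf.
Qed.

Lemma measurable_ler_set f a : measurable_fun setT f -> measurable [set x | f x <= a].
Proof.
by move=> mf; rewrite -preimage_itvNyc -[_ @^-1` _]setTI; exact: mf.
Qed.

Lemma measurable_fun_bigmax (I : Type) (r : seq I) (f : I -> T -> R) :
  (forall i, measurable_fun setT (f i)) ->
  measurable_fun setT (fun x => \big[Num.max/0]_(i <- r) f i x).
Proof.
move=> mf; elim: r => [|i r IH].
  by under eq_fun do rewrite big_nil; exact: measurable_cst.
under eq_fun do rewrite big_cons.
exact: measurable_realfun.measurable_maxr.
Qed.

Lemma union_bound_bigmax (mu : {measure set T -> \bar R}) {I : eqType}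
    (r : seq I) (f : I -> T -> R) (c e : R) :
  0 <= c -> (forall i, measurable_fun setT (f i)) ->
  (forall i, i \in r -> (mu [set x | (c < f i x)%R] <= e%:E)%E) ->
  (mu [set x | (c < \big[Num.max/0]_(i <- r) f i x)%R] <= ((size r)%:R * e)%:E)%E.
Proof.
move=> c_ge0 mf; elim: r => [|i r IH] tail_f.
  rewrite mul0r (_ : [set x | _] = set0) ?measure0 //.
  by apply/seteqP; split => x //=; rewrite big_nil ltNge c_ge0.
have -> : [set x | c < \big[Num.max/0]_(j <- i :: r) f j x] =
    [set x | c < f i x] `|` [set x | c < \big[Num.max/0]_(j <- r) f j x].
  by apply/seteqP; split => x /=; rewrite big_cons lt_max => /orP.
apply: le_trans (measureU2 _ _ _) _.
- exact: measurable_ltr_set.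
- exact/measurable_ltr_set/measurable_fun_bigmax.
rewrite /= -addn1 natrD mulrDl mul1r EFinD addeC.
apply: leeD; first exact/tail_f/mem_head.
by apply: IH => j jr; apply: tail_f; rewrite inE jr orbT.
Qed.

End measurable_events.

Lemma le_pospart (R : realType) (a : R) : a <= pospart a.
Proof. by rewrite le_max lexx. Qed.

Lemma lt_mul_pospart_subW (R : realType) (m y kappa c : R) :
  0 <= m -> 0 <= kappa -> 0 < c -> c < m * pospart (y - kappa) -> c < m * y.
Proof.
move=> m_ge0 kappa_ge0 c_gt0; rewrite /pospart.
case: (lerP (y - kappa) 0) => [y_le|y_gt].
  have : m * Num.max (y - kappa) 0 <= 0 by rewrite mulr_ge0_le0 // ge_max y_le lexx.
  lra.
have : m * Num.max (y - kappa) 0 <= m * (y - kappa).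
  by rewrite ler_wpM2l // ge_max lexx ltW.
have : 0 <= m * kappa by rewrite mulr_ge0.
rewrite mulrBr; lra.
Qed.

Lemma le_sqrt_mul_of_sqr_div (R : realType) (a c m : R) :
  0 < c -> a ^+ 2 / c ^+ 2 <= m -> a <= Num.sqrt m * c.
Proof.
move=> c_gt0 le_am.
have m_ge0 : 0 <= m by apply: le_trans le_am; rewrite divr_ge0 ?sqr_ge0.
apply: le_trans (ler_norm a) _.
rewrite -(ger0_norm (ltW c_gt0)) -(sqrtr_sqr a) -(sqrtr_sqr c) -sqrtrM //.
rewrite ler_sqrt ?mulr_ge0 ?sqr_ge0 ?(ltW c_gt0) //.
by rewrite -ler_pdivrMr ?exprn_gt0.
Qed.

Lemma expR_sqr_sqrt_ln_inv (R : realType) (beta : R) :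
  0 < beta <= 1 -> expR (- Num.sqrt (2 * ln beta^-1) ^+ 2 / 2) = beta.
Proof.
case/andP=> beta_gt0 beta_le1.
have ln_ge0 : 0 <= ln beta^-1 by rewrite ln_ge0 // invf_ge1.
rewrite sqr_sqrtr ?mulr_ge0 // mulNr [2 * _]mulrC mulfK ?pnatr_eq0 //.
by rewrite expRN lnK ?invrK // posrE invr_gt0.
Qed.

Section cusum_restart.
Context {R : realType} {d : measure_display} {T : measurableType d}.
Context {mu : {measure set T -> \bar R}} {s : nat -> T -> R} {W : nat} {kappa hC : R}.
Hypothesis measurable_s : forall t, measurable_fun setT (s t).

Lemma measurable_sbar t m : measurable_fun setT (sbar s t m).
Proof.
apply: measurable_realfun.measurable_funM; first exact: measurable_cst.
exact: measurable_sum.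
Qed.

Lemma measurable_window_score t m :
  measurable_fun setT (fun x => Num.sqrt m%:R * pospart (sbar s t m x - kappa)).
Proof.
apply: measurable_realfun.measurable_funM; first exact: measurable_cst.
apply: measurable_realfun.measurable_maxr; last exact: measurable_cst.
by apply: measurable_realfun.measurable_funB; [exact: measurable_sbar|exact: measurable_cst].
Qed.

Lemma measurable_Gscore t : measurable_fun setT (Gscore W kappa s t).
Proof. exact/measurable_fun_bigmax/measurable_window_score. Qed.

Lemma window_score_le_Gscore t m x : (1 <= m <= minn W t)%N ->
  Num.sqrt m%:R * (sbar s t m x - kappa) <= Gscore W kappa s t x.
Proof.
move=> m_range; apply: le_trans (le_bigmax_seq 0 m xpredT _ _ isT).
  by rewrite ler_wpM2l ?sqrtr_ge0 ?le_pospart.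
by rewrite mem_index_iota ltnS.
Qed.

Lemma Gscore_miss_detection t mstar delta :
  (1 <= mstar <= minn W t)%N -> kappa < delta ->
  (forall u, 0 < u ->
     (mu [set x | (Num.sqrt mstar%:R * (sbar s t mstar x - delta) <= - u)%R]
        <= (expR (- (u ^+ 2) / 2))%:E)%E) ->
  forall beta, 0 < beta < 1 ->
  (hC + Num.sqrt (2 * ln beta^-1)) ^+ 2 / (delta - kappa) ^+ 2 <= mstar%:R ->
  (mu [set x | (Gscore W kappa s t x <= hC)%R] <= beta%:E)%E.
Proof.
move=> m_range lt_kappa_delta tail_low beta /andP[beta_gt0 beta_lt1] large_mstar.
set u := Num.sqrt (2 * ln beta^-1).
have u_gt0 : 0 < u by rewrite sqrtr_gt0 mulr_gt0 // ln_gt0 // invf_gt1.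
have margin : hC + u <= Num.sqrt mstar%:R * (delta - kappa).
  by apply: le_sqrt_mul_of_sqr_div; rewrite ?subr_gt0.
have -> : beta%:E = (expR (- u ^+ 2 / 2))%:E.
  by rewrite expR_sqr_sqrt_ln_inv // beta_gt0 ltW.
apply: le_trans (tail_low u u_gt0); apply: le_measure; rewrite ?inE.
- exact/measurable_ler_set/measurable_Gscore.
- apply/measurable_ler_set/measurable_realfun.measurable_funM.
    exact: measurable_cst.
  by apply: measurable_realfun.measurable_funB; [exact: measurable_sbar|exact: measurable_cst].
move=> x /= /(le_trans (window_score_le_Gscore _ _ x m_range)).
by move: margin; rewrite !mulrBr; lra.
Qed.

Hypothesis kappa_ge0 : 0 <= kappa.
Context {e : R}.
Hypotheses (hC_gt0 : 0 < hC) (e_ge0 : 0 <= e).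

Lemma Gscore_false_alarm t :
  (forall m, (1 <= m <= minn W t)%N ->
     (mu [set x | (hC < Num.sqrt m%:R * sbar s t m x)%R] <= e%:E)%E) ->
  (mu [set x | (hC < Gscore W kappa s t x)%R] <= (W%:R * e)%:E)%E.
Proof.
move=> tail_m.
apply: le_trans (union_bound_bigmax mu _ _ _ _ (ltW hC_gt0) _ _) _.
- exact: measurable_window_score.
- move=> m; rewrite mem_index_iota => m_range.
  apply: le_trans (tail_m m m_range).
  apply: le_measure; rewrite ?inE.
  + exact/measurable_ltr_set/measurable_window_score.
  + apply/measurable_ltr_set/measurable_realfun.measurable_funM.
      exact: measurable_cst.
    exact: measurable_sbar.
  + by move=> x /=; apply: lt_mul_pospart_subW; rewrite ?sqrtr_ge0.
by rewrite lee_fin size_iota subn1 ler_wpM2r // ler_nat geq_minl.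
Qed.

Lemma maxGscore_false_alarm TT :
  (forall t m, (1 <= t <= TT)%N -> (1 <= m <= minn W t)%N ->
     (mu [set x | (hC < Num.sqrt m%:R * sbar s t m x)%R] <= e%:E)%E) ->
  (mu [set x | (hC < maxGscore W kappa s TT x)%R] <= ((TT * W)%:R * e)%:E)%E.
Proof.
move=> tail_tm.
apply: le_trans (union_bound_bigmax mu _ _ _ _ (ltW hC_gt0) _ _) _.
- exact: measurable_Gscore.
- move=> t; rewrite mem_index_iota => t_range.
  by apply: Gscore_false_alarm => m; exact: tail_tm.
by rewrite size_iota subn1 natrM mulrA.
Qed.

End cusum_restart.

Theorem proposition4 (R : realType) (d : measure_display) (Omega : measurableType d)
  (P : probability Omega R) (s : nat -> Omega -> R)
  (hs : forall t, measurable_fun setT (s t))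
  (W : nat) (kappa hC : R)
  (hW : (1 <= W)%N) (hkappa : 0 <= kappa) (hhC : 0 < hC) :
  (* (i) false alarms *)
  (forall TT : nat,
     (forall t m : nat, (1 <= t <= TT)%N -> (1 <= m <= minn W t)%N ->
        forall a : R, 0 < a ->
        (P [set x | (a < Num.sqrt (m%:R) * sbar s t m x)%R] <= (expR (- (a ^+ 2) / 2))%:E)%E) ->
     (P [set x | (hC < maxGscore W kappa s TT x)%R]
        <= ((TT * W)%:R * expR (- (hC ^+ 2) / 2))%:E)%E)
  /\
  (* (ii) detection *)
  (forall (t mstar : nat) (delta : R),
     (1 <= mstar <= minn W t)%N -> kappa < delta ->
     (forall u : R, 0 < u ->
        (P [set x | (Num.sqrt (mstar%:R) * (sbar s t mstar x - delta) <= - u)%R]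
           <= (expR (- (u ^+ 2) / 2))%:E)%E) ->
     forall beta : R, 0 < beta < 1 ->
     (hC + Num.sqrt (2 * ln (beta^-1))) ^+ 2 / (delta - kappa) ^+ 2 <= mstar%:R ->
     (P [set x | (Gscore W kappa s t x <= hC)%R] <= beta%:E)%E).
Proof.
split; last exact: (Gscore_miss_detection hs).
move=> TT tail_up.
apply: (maxGscore_false_alarm hs hkappa hhC (expR_ge0 _)) => t m t_range m_range.
exact: tail_up.
Qed.
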